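(* Let $X$ be a rank-one subshift, associated to a rank-one transformation on a finite measure space, with cut sequence $(r_n)$ and spacer sequence $(s_{n,i})$ such that $s_{n,r_n}=0$ for all sufficiently large $n$. If for infinitely many $n$ the set $\{s_{m,i}: m\ge n,\ 0\le i<r_m\}$ contains at least three distinct values, then $\limsup_{q\to\infty} p(q)/q\ge 2$.
   Context: Rank-one transformations: given a cut sequence $(r_n)_{n\ge1}$ of positive integers and a spacer sequence $(s_{n,i})_{n\ge1,0\le i\le r_n}$ of nonnegative integers, the rank-one transformation is built by cutting and stacking ($C_1=[0,1)$; $C_{n+1}$ obtained by cutting $C_n$ into $r_n+1$ equal-width subcolumns, adding $s_{n,i}$ spacers atop subcolumn $i$, stacking left to right); the space has finite measure iff $\sum_n\frac{1}{r_nh_n}\sum_i s_{n,i}<\infty$. The associated subshift is given by $B_1=0$, $B_{n+1}=B_n1^{s_{n,0}}\cdots B_n1^{s_{n,r_n}}$ ($h_n=$ length of $B_n$): all $x\in\{0,1\}^{\mathbb Z}$ whose finite subwords are subwords of some $B_n$; $p(q)$ is the number of distinct words of length $q$ occurring in it. *)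

From HB Require Import structures.
From mathcomp Require Import all_boot all_order all_algebra.
From mathcomp Require Import all_classical all_reals all_analysis.
Set Implicit Arguments. Unset Strict Implicit. Unset Printing Implicit Defensive.
Import Order.TTheory GRing.Theory Num.Theory numFieldNormedType.Exports.

(* Indexing convention: the paper's sequences are indexed by n >= 1;
   here [r n] and [s n i] are the paper's r_n and s_{n,i} (values at n = 0
   are irrelevant).  [Bword r s k] is the paper's B_{k+1}; alphabet {0,1}
   is bool with 0 = false and 1 = true. *)
Fixpoint Bword (r : nat -> nat) (s : nat -> nat -> nat) (k : nat) : seq bool :=
  match k with
  | 0 => [:: false]
  | k'.+1 => flatten [seq Bword r s k' ++ nseq (s k'.+1 i) true
                     | i <- iota 0 (r k'.+1).+1]
  end.

Definition height (r : nat -> nat) (s : nat -> nat -> nat) (n : nat) : nat :=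
  size (Bword r s n.-1).

Definition spacers (r : nat -> nat) (s : nat -> nat -> nat) (n : nat) : nat :=
  \sum_(0 <= i < (r n).+1) s n i.

Definition finite_measure (R : realType) (r : nat -> nat) (s : nat -> nat -> nat) : Prop :=
  let u : R^nat := fun k : nat =>
     ((spacers r s k.+1)%:R / ((r k.+1)%:R * (height r s k.+1)%:R))%R in
  cvgn (series u).

Definition window (x : int -> bool) (i : int) (len : nat) : seq bool :=
  [seq x (i + k%:Z)%R | k <- iota 0 len].

Definition rank_one_subshift (r : nat -> nat) (s : nat -> nat -> nat) : set (int -> bool) :=
  [set x | forall (i : int) (len : nat), exists n, infix (window x i len) (Bword r s n)].

Definition occurs_in (X : set (int -> bool)) (w : seq bool) : Prop :=
  exists x, X x /\ exists i : int, window x i (size w) = w.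

Definition complexity (r : nat -> nat) (s : nat -> nat -> nat) (q : nat) : nat :=
  #|[set w : q.-tuple bool | `[< occurs_in (rank_one_subshift r s) (tval w) >]]|.

From HB Require Import structures.
From mathcomp Require Import all_boot all_order all_algebra.
From mathcomp Require Import all_classical all_reals all_analysis.
From mathcomp Require Import zify ring lra.
Import Order.TTheory GRing.Theory Num.Theory numFieldNormedType.Exports.
Set Implicit Arguments. Unset Strict Implicit. Unset Printing Implicit Defensive.

(** A length-[q] word is right special if it extends both by 0 and by 1; if for every
   [q] in [[q0, Q)] two distinct right-special words exist, then [p(Q) >= 2 (Q - q0)].
   From some level on, [B_k] is both a prefix and a suffix of [B_{k+1}] and ends with a
   fixed block [0 1^J].  Hence if a spacer value [g] occurs after level [k] and so does
   a larger one, every suffix of [B_k 1^g] is right special: it is continued by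
   [0] (the next copy of [B_k]) and by [1].  If spacers are unbounded, [1^q] is right
   special too, and finite measure provides at level [k+1] a spacer [g = o(h_k)]; the
   suffixes of [B_k 1^g] longer than [J + g] are not [1^q].  If spacers are bounded,
   the values occurring late recur forever, and two of the three values lie below the
   third, giving suffixes of [B_k 1^a] and [B_k 1^b].  Either way
   [p(h_k + 1) >= 2 (h_k + 1) - o(h_k)].  That the words [B_k] occur in the two-sided
   subshift is witnessed by a point read off a nested sequence of words [B_k T_k]. *)

Section LastItems.
Variable T : Type.
Implicit Types (u v : seq T) (x : T).

(* [lastn n u] is the suffix of length [n] of [u], or all of [u] when [n > size u]. *)
Definition lastn n u := drop (size u - n) u.

Lemma size_lastn n u : n <= size u -> size (lastn n u) = n.
Proof. by rewrite size_drop; lia. Qed.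

Lemma lastn_size u : lastn (size u) u = u.
Proof. by rewrite /lastn subnn drop0. Qed.

Lemma lastn_cat n u v : n <= size v -> lastn n (u ++ v) = lastn n v.
Proof.
move=> le_nv; rewrite /lastn drop_cat size_cat ifF; last by apply/negbTE; rewrite -leqNgt; lia.
by congr drop; lia.
Qed.

Lemma lastn_lastn m n u : m <= n <= size u -> lastn m (lastn n u) = lastn m u.
Proof. by case/andP=> le_mn le_nu; rewrite /lastn drop_drop size_lastn //; congr drop; lia. Qed.

Lemma lastn_nseq m n x : m <= n -> lastn m (nseq n x) = nseq m x.
Proof. by move=> le_mn; rewrite /lastn drop_nseq size_nseq; congr nseq; lia. Qed.

Lemma lastn_rcons n u x : n <= size u -> lastn n.+1 (rcons u x) = rcons (lastn n u) x.
Proof. by move=> le_nu; rewrite /lastn size_rcons subSS drop_rcons // leq_subr. Qed.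

End LastItems.

Section TrailingRuns.
Variables (T : eqType) (x y : T).

Lemma lastn_neq (u v : seq T) t q : x != y -> t < q -> q <= size u -> size v = q ->
  lastn t.+1 u = x :: nseq t y -> lastn t.+1 v = nseq t.+1 y -> lastn q u != v.
Proof.
move=> neq_xy lt_tq le_qu size_v u_tail v_tail; apply/eqP => /(congr1 (lastn t.+1)).
by rewrite lastn_lastn ?lt_tq ?le_qu // u_tail v_tail => -[/eqP]; rewrite (negbTE neq_xy).
Qed.

Lemma lastn_run (V : seq T) t : lastn t.+1 (V ++ x :: nseq t y) = x :: nseq t y.
Proof.
have <- : size (x :: nseq t y) = t.+1 by rewrite /= size_nseq.
by rewrite lastn_cat ?lastn_size.
Qed.

Lemma lastn_run_tail (V : seq T) t n : n <= t -> lastn n (V ++ x :: nseq t y) = nseq n y.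
Proof. by move=> le_nt; rewrite -cat1s catA lastn_cat ?size_nseq // lastn_nseq. Qed.

End TrailingRuns.

Lemma size_window x i n : size (window x i n) = n.
Proof. by rewrite size_map size_iota. Qed.

Lemma window_add x i m n :
  window x i (m + n) = window x i m ++ window x (i + m%:Z)%R n.
Proof.
rewrite /window iotaD map_cat add0n; congr (_ ++ _).
rewrite -[in LHS](addn0 m) iotaDl -map_comp.
by apply: eq_map => k /=; rewrite PoszD addrA.
Qed.

Section Occurrence.
Variable X : set (int -> bool).

Lemma occurs_infix v w : occurs_in X w -> infix v w -> occurs_in X v.
Proof.
move=> [x [Xx [i wi]]] /infixP [a [b w_eq]]; exists x; split=> //.
exists (i + (size a)%:Z)%R; apply/eqP.
move: wi; rewrite w_eq !size_cat !window_add => /eqP.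
by rewrite !eqseq_cat ?size_window // => /and3P [].
Qed.

Definition right_special w :=
  occurs_in X (rcons w false) /\ occurs_in X (rcons w true).

Lemma right_special_lastn u q :
  occurs_in X (rcons u false) -> occurs_in X (rcons u true) -> q <= size u ->
  right_special (lastn q u).
Proof.
move=> u0 u1 le_qu; split; [apply: occurs_infix u0 _ | apply: occurs_infix u1 _];
  by rewrite -lastn_rcons // suffixW // suffix_drop.
Qed.

Lemma occurs_rcons w : occurs_in X w ->
  occurs_in X (rcons w false) \/ occurs_in X (rcons w true).
Proof.
move=> [x [Xx [i wi]]].
have : window x i (size w).+1 = rcons w (x (i + (size w)%:Z)%R).
  by rewrite -addn1 window_add wi -cats1 /window /= addr0.
by case: (x _) => wi1; [right | left]; exists x; split=> //; exists i; rewrite size_rcons.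
Qed.

Definition word_count q := #|[set w : q.-tuple bool | `[< occurs_in X w >]]|.

Lemma word_count_succ q (w1 w2 : seq bool) : size w1 = q -> size w2 = q ->
  w1 != w2 -> right_special w1 -> right_special w2 ->
  word_count q + 2 <= word_count q.+1.
Proof.
move=> /eqP size1 /eqP size2 neq12 [w1_0 w1_1] [w2_0 w2_1].
pose t1 := Tuple size1; pose t2 := Tuple size2.
pose ext (e : bool) := [set w : q.-tuple bool | `[< occurs_in X (rcons w e) >]].
pose app (e : bool) (w : q.-tuple bool) := [tuple of rcons w e].
have app_inj e : injective (app e).
  by move=> u v /(congr1 val) /eqP; rewrite eqseq_rcons eqxx andbT => /eqP /val_inj.
have app_occ : app false @: ext false :|: app true @: ext true
    \subset [set w : q.+1.-tuple bool | `[< occurs_in X w >]].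
  rewrite finset.subUset; apply/andP.
  by split; apply/fintype.subsetP => _ /imsetP [w + ->]; rewrite !inE.
have app_disj : app false @: ext false :&: app true @: ext true = finset.set0.
  apply/finset.setP => t; rewrite !inE; apply/negP => /andP [/imsetP [u _ ->] /imsetP [v _]].
  by move/(congr1 (last false \o val)); rewrite /= !last_rcons.
have occ_ext : [set w : q.-tuple bool | `[< occurs_in X w >]] \subset ext false :|: ext true.
  apply/fintype.subsetP => w; rewrite !inE => w_occ.
  by case: (occurs_rcons w_occ) => ?; apply/orP; [left | right]; apply/asboolP.
have two_ext : [set t1; t2] \subset ext false :&: ext true.
  by apply/fintype.subsetP => w; rewrite !inE => /orP [] /eqP ->; apply/andP; split; apply/asboolP.
have := subset_leq_card app_occ; have := subset_leq_card occ_ext.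
have := subset_leq_card two_ext; rewrite cards2 (_ : t1 != t2) //.
have := cardsUI (ext false) (ext true).
have := cardsUI (app false @: ext false) (app true @: ext true).
by rewrite /word_count app_disj cards0 !card_imset //; lia.
Qed.

Lemma word_count_ge lo Q :
  (forall q, lo <= q < Q -> exists w1 w2 : seq bool,
     [/\ size w1 = q, size w2 = q, w1 != w2, right_special w1 & right_special w2]) ->
  2 * (Q - lo) <= word_count Q.
Proof.
elim: Q => [|Q IH] two_rs; first by rewrite sub0n.
have [lt_Qlo | le_loQ] := ltnP Q lo; first by rewrite (eqP (_ : Q.+1 - lo == 0)) //; lia.
have [w1 [w2 [size1 size2 neq12 rs1 rs2]]] := two_rs Q (ltac:(lia)).
have := word_count_succ size1 size2 neq12 rs1 rs2.
have := IH (fun q le_q => two_rs q (ltac:(lia))); lia.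
Qed.

End Occurrence.

Lemma limn_esup_ratio_ge2 (R : realType) (p : nat -> nat) :
  (forall e : R, (0 < e)%R -> forall K, exists h C,
     [/\ K <= h, (C%:R <= e * h%:R)%R & 2 * (h - C) <= p h]) ->
  ((2%:R : R)%:E <= limn_esup (fun q => ((p q)%:R / q%:R : R)%:E))%E.
Proof.
move=> defect_small; rewrite limn_esup_lim; apply/lee_subgt0Pr => e e0.
apply: lime_ge; first exact: is_cvg_esups.
apply: nearW => n.
have [h [C [lt_nh le_C le_p]]] := defect_small (e / 2)%R (divr_gt0 e0 (ltr0Sn _ 1)) n.+1.
apply: le_trans (ereal_sup_ubound _); last by exists h => //; apply: ltnW.
have h_gt0 : (0 < h%:R :> R)%R by rewrite ltr0n; lia.
rewrite -EFinB lee_fin ler_pdivlMr //.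
have : (2 * h%:R - 2 * C%:R <= (p h)%:R :> R)%R.
  have [le_Ch | lt_hC] := leqP C h.
    by move: le_p; rewrite -(ler_nat R) natrM natrB //; lra.
  have : (h%:R < C%:R :> R)%R by rewrite ltr_nat.
  have := ler0n R (p h); nra.
nra.
Qed.

Section NestedLimit.
Variables (D : nat -> seq bool) (o : nat -> nat).
Hypothesis D_nested : forall m, exists P S, D m.+1 = P ++ D m ++ S /\ o m.+1 = size P + o m.
Hypothesis o_ge : forall m, m <= o m.
Hypothesis D_size : forall m, o m + m < size (D m).

(* Each [D m] reappears in [D m.+1] with its origin [o m] moved to [o m.+1]; the limit
   point reads coordinate [i] relative to that origin in [D |i|]. *)
Definition nested_limit (i : int) : bool :=
  nth false (D (absz i)) (absz ((o (absz i))%:Z + i)%R).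

Lemma D_nested_le m m' : m <= m' ->
  exists P S, D m' = P ++ D m ++ S /\ o m' = size P + o m.
Proof.
move=> /subnK <-; elim: (m' - m) => [|d [P [S [D_dm o_dm]]]].
  by exists [::], [::]; rewrite cats0.
have [P' [S' [-> ->]]] := D_nested (d + m); rewrite D_dm o_dm.
by exists (P' ++ P), (S ++ S'); rewrite size_cat !catA addnA.
Qed.

Lemma nth_nested m m' i : m <= m' -> (0 <= (o m)%:Z + i < (size (D m))%:Z)%R ->
  nth false (D m') (absz ((o m')%:Z + i)%R) = nth false (D m) (absz ((o m)%:Z + i)%R).
Proof.
move=> le_mm' i_in; have [P [S [-> ->]]] := D_nested_le le_mm'.
have -> : absz ((size P + o m)%:Z + i)%R = size P + absz ((o m)%:Z + i)%R by lia.
by rewrite nth_cat ltnNge leq_addr /= addKn nth_cat ifT //; lia.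
Qed.

Lemma nested_limitE m i : (0 <= (o m)%:Z + i < (size (D m))%:Z)%R ->
  nested_limit i = nth false (D m) (absz ((o m)%:Z + i)%R).
Proof.
move=> i_in; rewrite /nested_limit; have [le_mi | le_im] := leqP m (absz i).
  exact: nth_nested.
apply/esym/nth_nested; first exact: ltnW.
by have := o_ge (absz i); have := D_size (absz i); lia.
Qed.

Lemma window_nested_limit m i len :
  (0 <= (o m)%:Z + i)%R -> absz ((o m)%:Z + i)%R + len <= size (D m) ->
  window nested_limit i len = take len (drop (absz ((o m)%:Z + i)%R) (D m)).
Proof.
move=> i_ge0 win_in; rewrite -(map_nth_iota false); last by lia.
rewrite /window -[absz _ in RHS]addn0 iotaDl -map_comp.
apply/eq_in_map => k; rewrite mem_iota => /andP [_ lt_k] /=.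
by rewrite (nested_limitE (m := m)); [congr nth; lia | lia].
Qed.

End NestedLimit.

Lemma eventually_all_lt (P : nat -> nat -> Prop) n :
  (forall v k k', k <= k' -> P v k -> P v k') ->
  (forall v, v < n -> exists k, P v k) -> exists k, forall v, v < n -> P v k.
Proof.
move=> P_mono; elim: n => [|n IH] P_ev; first by exists 0.
have [k Pk] := IH (fun v lt_vn => P_ev v (ltnW lt_vn)).
have [k' Pk'] := P_ev n (ltnSn n).
exists (maxn k k') => v; rewrite ltnS leq_eqVlt => /orP [/eqP -> | lt_vn].
  exact: P_mono (leq_maxr _ _) Pk'.
exact: P_mono (leq_maxl _ _) (Pk v lt_vn).
Qed.

Lemma exists_le_mean (f : nat -> nat) n : 0 < n ->
  exists2 i, i < n & f i * n <= \sum_(0 <= j < n.+1) f j.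
Proof.
move=> n_gt0; have [i _ min_i] := arg_minnP (fun i : 'I_n => f i) (isT : predT (Ordinal n_gt0)).
exists i => //; rewrite big_nat_recr //= big_mkord.
rewrite (leq_trans _ (leq_addr _ _)) // -iter_addn_0 -big_const_ord.
by apply: leq_sum => j _; apply: min_i.
Qed.

Lemma infix_flatten_adjacent (T : eqType) (f : nat -> seq T) n i : i < n ->
  infix (f i ++ f i.+1) (flatten [seq f j | j <- iota 0 n.+1]).
Proof.
move=> lt_in; have -> : n.+1 = i + (n - i.+1).+2 by lia.
by rewrite iotaD add0n map_cat flatten_cat /= infix_catl // catA prefix_infix.
Qed.

Lemma split_last_false (w : seq bool) : false \in w ->
  exists V J, w = V ++ false :: nseq J true.
Proof.
elim/last_ind: w => [//|w [] IH]; last by exists w, 0; rewrite cats1.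
rewrite -cats1 mem_cat orbF => /IH [V [J ->]].
by exists V, J.+1; rewrite -catA /= -[[:: true]]/(nseq 1 true) -nseqD addn1.
Qed.

Section Bword.
Variables (r : nat -> nat) (s : nat -> nat -> nat).
Local Notation B := (Bword r s).

Lemma BwordS k :
  B k.+1 = flatten [seq B k ++ nseq (s k.+1 i) true | i <- iota 0 (r k.+1).+1].
Proof. by []. Qed.

Lemma Bword_return k i : i < r k.+1 ->
  infix (B k ++ nseq (s k.+1 i) true ++ B k) (B k.+1).
Proof.
move=> lt_ir.
apply: infix_trans (infix_flatten_adjacent (fun j => B k ++ nseq (s k.+1 j) true) lt_ir).
by rewrite prefixW // !catA prefix_prefix.
Qed.

Lemma Bword_prefix k m : k <= m -> prefix (B k) (B m).
Proof.
move=> /subnK <-; elim: (m - k) => [|d IH]; first exact: prefix_refl.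
by apply: prefix_trans IH _; rewrite addSn /= -catA prefix_prefix.
Qed.

Hypothesis r_gt0 : forall n, 1 <= n -> 0 < r n.

Lemma size_Bword k : k < size (B k).
Proof.
elim: k => [//|k IH].
have le_sz : size (B k) + size (B k) <= size (B k.+1).
  apply: leq_trans _ (size_infix (Bword_return (@r_gt0 k.+1 isT))).
  by rewrite !size_cat leq_add2l leq_addl.
lia.
Qed.

Variable N : nat.
Hypothesis last_spacer0 : forall n, N <= n -> s n (r n) = 0.

Lemma Bword_suffix k m : N <= k <= m -> suffix (B k) (B m).
Proof.
case/andP=> le_Nk /subnK <-; elim: (m - k) => [|d IH]; first exact: suffix_refl.
apply: suffix_trans IH _; rewrite addSn BwordS -(addn1 (r _)) iotaD map_cat flatten_cat /=.
by rewrite last_spacer0 ?cats0 ?suffix_suffix //; lia.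
Qed.

Lemma Bword_trailing_ones :
  exists J, forall k, N <= k -> exists V, B k = V ++ false :: nseq J true.
Proof.
have /prefixP [t B_N] := Bword_prefix (leq0n N).
have /split_last_false [V [J B_N_eq]] : false \in B N by rewrite B_N mem_head.
exists J => k le_Nk; have /suffixP [P ->] : suffix (B N) (B k) by rewrite Bword_suffix ?leqnn.
by exists (P ++ V); rewrite B_N_eq catA.
Qed.

Lemma Bword_spacer_return k L i : N <= k < L -> i < r L ->
  infix (B k ++ nseq (s L i) true ++ B k) (B L).
Proof.
case: L => [|L] /andP [le_Nk lt_kL] lt_ir; first by [].
have /suffixP [P B_P] : suffix (B k) (B L) by rewrite Bword_suffix // le_Nk.
have /prefixP [S B_S] : prefix (B k) (B L) by rewrite Bword_prefix.
apply: infix_trans (Bword_return lt_ir); rewrite {1}B_P B_S.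
by rewrite -!catA infix_catl // !catA prefixW // prefix_prefix.
Qed.

Lemma Bword_spacer_false k L i : N <= k < L -> i < r L ->
  infix (rcons (B k ++ nseq (s L i) true) false) (B L).
Proof.
move=> /Bword_spacer_return hret /hret; apply: prefix_infix_trans.
rewrite -cats1 catA prefix_catr // eqxx /=.
exact: Bword_prefix (leq0n k).
Qed.

Lemma Bword_spacer_true k L i g : N <= k < L -> i < r L -> g < s L i ->
  infix (rcons (B k ++ nseq g true) true) (B L).
Proof.
move=> /Bword_spacer_return hret /hret + lt_gs; apply: prefix_infix_trans.
have [d ->] : exists d, s L i = g + d.+1 by exists (s L i - g.+1); lia.
by rewrite nseqD -cats1 -!catA !prefix_catr // !eqxx /= prefix0s.
Qed.

Local Notation X := (rank_one_subshift r s).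

Lemma Bword_occurs_of_extension (T : nat -> seq bool) :
  (forall m, prefix (T m) (T m.+1)) -> (forall m, m < size (T m)) ->
  (forall m, N <= m -> exists L, infix (B m ++ T m) (B L)) ->
  forall m, N <= m -> occurs_in X (B m).
Proof.
move=> T_mono T_size T_legal.
pose D m := B (N + m) ++ T (N + m); pose o m := size (B (N + m)).
have D_nested m : exists P S, D m.+1 = P ++ D m ++ S /\ o m.+1 = size P + o m.
  have /suffixP [P B_P] : suffix (B (N + m)) (B (N + m).+1).
    by rewrite Bword_suffix // leq_addr leqnSn.
  have /prefixP [S T_S] := T_mono (N + m).
  by exists P, S; rewrite /D /o addnS B_P T_S size_cat !catA.
have o_ge m : m <= o m by have := size_Bword (N + m); rewrite /o; lia.
have D_size m : o m + m < size (D m) by have := T_size (N + m); rewrite /D /o size_cat; lia.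
have x_in : X (nested_limit D o).
  move=> i len; pose m := absz i + len.
  have [L legal] := T_legal (N + m) (leq_addr _ _).
  have o_m := o_ge m; have D_m := D_size m.
  exists L; rewrite (window_nested_limit D_nested o_ge D_size (m := m)); [|lia|lia].
  exact: infix_trans (infix_take _ _) (infix_trans (infix_drop _ _) legal).
move=> m le_Nm; exists (nested_limit D o); split=> //.
exists (- (o (m - N)%N)%:Z)%R.
rewrite (window_nested_limit D_nested o_ge D_size (m := m - N)) ?addrN //=.
  by rewrite /D subnKC // drop0 take_size_cat.
by rewrite /D /o subnKC // size_cat leq_addr.
Qed.

(* Only the spacers [s L i] with [i < r L], which separate two copies of [B_{L-1}], count. *)
Definition late_spacer k v := exists L i, [/\ k < L, i < r L & s L i = v].
Definition recurrent_spacer v := forall k, late_spacer k v.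
Definition unbounded_spacers := forall k j, exists2 v, j <= v & late_spacer k v.

Lemma late_spacer_mono k k' v : k <= k' -> late_spacer k' v -> late_spacer k v.
Proof. by move=> le_kk' [L [i [lt_k'L lt_ir s_v]]]; exists L, i; split=> //; lia. Qed.

Lemma recurrent_of_bounded : ~ unbounded_spacers ->
  exists K, forall L i, K < L -> i < r L -> recurrent_spacer (s L i).
Proof.
move=> /existsNP [k /existsNP [j bounded]].
have late_lt v : late_spacer k v -> v < j.
  by move=> late_v; rewrite ltnNge; apply/negP => le_jv; apply: bounded; exists v.
have [K recK] : exists K, forall v, v < j -> recurrent_spacer v \/ ~ late_spacer K v.
  apply: eventually_all_lt => v.
    move=> K K' le_KK' [rec_v | not_late]; first by left.
    by right => /(late_spacer_mono le_KK').
  move=> _; have [rec_v | /existsNP [K' not_late]] := pselect (recurrent_spacer v).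
    by exists 0; left.
  by exists K'; right.
exists (maxn k K) => L i lt_L lt_ir.
have late_s k' : k' <= maxn k K -> late_spacer k' (s L i) by exists L, i; split=> //; lia.
by case: (recK _ (late_lt _ (late_s k (leq_maxl _ _)))) => // /(_ (late_s K (leq_maxr _ _))).
Qed.

Lemma Bword_occurs_of_recurrent a : recurrent_spacer a ->
  forall m, N <= m -> occurs_in X (B m).
Proof.
move=> rec_a; apply: (@Bword_occurs_of_extension (fun m => nseq a true ++ B m)).
- by move=> m; rewrite prefix_catr ?size_nseq // eqxx Bword_prefix.
- by move=> m; rewrite size_cat; have := size_Bword m; lia.
move=> m le_Nm; have [L [i [lt_mL lt_ir <-]]] := rec_a m.
by exists L; apply: Bword_spacer_return lt_ir; rewrite le_Nm.
Qed.

Lemma Bword_occurs_of_unbounded : unbounded_spacers ->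
  forall m, N <= m -> occurs_in X (B m).
Proof.
move=> unb; apply: (@Bword_occurs_of_extension (fun m => nseq m.+1 true)).
- by move=> m; rewrite -[m.+2]addn1 nseqD prefix_prefix.
- by move=> m; rewrite size_nseq.
move=> m le_Nm; have [v le_v [L [i [lt_mL lt_ir s_v]]]] := unb m m.+1.
have m_mid : N <= m < L by rewrite le_Nm.
exists L; apply: prefix_infix_trans (Bword_spacer_return m_mid lt_ir).
by rewrite s_v -(subnKC le_v) nseqD !catA -catA prefix_prefix.
Qed.

Section RightSpecial.
Hypothesis Bword_occurs : forall m, N <= m -> occurs_in X (B m).

Lemma right_special_Bword_spacer k g q : N <= k ->
  late_spacer k g -> (exists2 v, g < v & late_spacer k v) -> q <= size (B k) + g ->
  right_special X (lastn q (B k ++ nseq g true)).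
Proof.
move=> le_Nk [L [i [lt_kL lt_ir <-]]] [v lt_gv [L' [i' [lt_kL' lt_ir' s_v]]]] le_q.
have le_NL : N <= L by lia.
have le_NL' : N <= L' by lia.
have mid_L : N <= k < L by rewrite le_Nk.
have mid_L' : N <= k < L' by rewrite le_Nk.
have lt_gs : s L i < s L' i' by rewrite s_v.
apply: right_special_lastn; last by rewrite size_cat size_nseq.
  exact: occurs_infix (Bword_occurs le_NL) (Bword_spacer_false mid_L lt_ir).
exact: occurs_infix (Bword_occurs le_NL') (Bword_spacer_true mid_L' lt_ir' lt_gs).
Qed.

Lemma right_special_ones q : unbounded_spacers -> right_special X (nseq q true).
Proof.
move=> unb; have [v le_qv late_v] := unb N q; have [v' lt_vv' late_v'] := unb N v.+1.
rewrite -(lastn_nseq true le_qv) -(lastn_cat (B N)) ?size_nseq //.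
apply: right_special_Bword_spacer (leqnn N) late_v _ _; first by exists v'.
exact: leq_trans le_qv (leq_addl _ _).
Qed.

Lemma complexity_Bword_ge k V J g (w : nat -> seq bool) : N <= k ->
  B k = V ++ false :: nseq J true ->
  late_spacer k g -> (exists2 v, g < v & late_spacer k v) ->
  (forall q, J + g < q <= size (B k) -> [/\ size (w q) = q, right_special X (w q)
     & lastn (J + g).+1 (w q) = nseq (J + g).+1 true]) ->
  2 * ((size (B k)).+1 - (J + g).+1) <= complexity r s (size (B k)).+1.
Proof.
move=> le_Nk B_V late_g late_gt w_ok; apply: (word_count_ge (X := X)) => q /andP [le_q lt_q].
have q_in : J + g < q <= size (B k) by rewrite le_q -ltnS.
have [size_w rs_w tail_w] := w_ok q q_in.
pose u := B k ++ nseq g true.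
have u_eq : u = V ++ false :: nseq (J + g) true by rewrite /u B_V -catA /= nseqD.
have le_q_kg : q <= size (B k) + g by rewrite (leq_trans (ltnSE lt_q)) ?leq_addr.
have le_qu : q <= size u by rewrite size_cat size_nseq.
exists (lastn q u), (w q); split => //.
- exact: size_lastn.
- by apply: (lastn_neq (x := false)) tail_w => //; rewrite u_eq lastn_run.
exact: right_special_Bword_spacer le_Nk late_g late_gt le_q_kg.
Qed.

End RightSpecial.

(* The terms of the finite-measure series tend to 0, and the least of the [r_{k+1}]
   inner spacers of level [k+1] is at most their mean. *)
Lemma small_spacer_of_finite_measure (R : realType) : finite_measure R r s ->
  forall e : R, (0 < e)%R -> exists K, forall k, K <= k ->
    exists2 i, i < r k.+1 & ((s k.+1 i)%:R <= e * (size (B k))%:R)%R.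
Proof.
move=> fin e e0; have [K _ small] := cvgr0_norm_le _ (cvg_series_cvg_0 fin) _ e0.
exists K => k /small; rewrite /= /height /= ger0_norm; last first.
  by apply: divr_ge0; [exact: ler0n | apply: mulr_ge0; exact: ler0n].
have r_pos : (0 < (r k.+1)%:R :> R)%R by rewrite ltr0n r_gt0.
have h_pos : (0 < (size (B k))%:R :> R)%R by rewrite ltr0n (leq_ltn_trans _ (size_Bword k)).
rewrite ler_pdivrMr ?mulr_gt0 // => le_spacers.
have [i lt_ir le_mean] := exists_le_mean (s k.+1) (r_gt0 (ltn0Sn k)).
exists i => //; move: le_mean; rewrite -(ler_nat R) natrM => le_mean.
rewrite -(ler_pM2r r_pos) -mulrA [((size _)%:R * _)%R]mulrC.
exact: le_trans le_mean le_spacers.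
Qed.

Local Notation limsup_ratio R :=
  (limn_esup (fun q : nat => ((complexity r s q)%:R / q%:R : R)%:E)).

Theorem complexity_limsup_recurrent (R : realType) a b c :
  a != b -> a < c -> b < c ->
  recurrent_spacer a -> recurrent_spacer b -> recurrent_spacer c ->
  ((2%:R : R)%:E <= limsup_ratio R)%E.
Proof.
move=> neq_ab lt_ac lt_bc rec_a rec_b rec_c.
wlog lt_ab : a b neq_ab lt_ac lt_bc rec_a rec_b / a < b.
  move=> main; case: (ltngtP a b) => [|lt_ba|eq_ab]; first exact: main.
    by apply: (main b a) => //; rewrite eq_sym.
  by rewrite eq_ab eqxx in neq_ab.
have B_occurs := Bword_occurs_of_recurrent rec_c.
have [J J_tail] := Bword_trailing_ones.
apply: limn_esup_ratio_ge2 => e e0 K.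
pose C := (J + a).+1; pose M := Num.Def.archi_bound (C%:R / e : R).
pose k := maxn (maxn N K) M; have size_k := size_Bword k.
have le_Nk : N <= k by lia.
have [V B_V] := J_tail k le_Nk.
exists (size (B k)).+1, C; split; first by lia.
  have : (C%:R / e < M%:R :> R)%R by apply: archi_boundP; rewrite divr_ge0 // ltW.
  rewrite ltr_pdivrMr // => lt_CM; apply/ltW/(lt_le_trans lt_CM).
  by rewrite mulrC ler_wpM2l ?(ltW e0) // ler_nat; lia.
have late_c v : v < c -> exists2 v', v < v' & late_spacer k v' by exists c.
apply: (complexity_Bword_ge (w := fun q => lastn q (B k ++ nseq b true)) B_occurs le_Nk B_V
          (rec_a k) (late_c a lt_ac)).
move=> q /andP [lt_q le_q]; have le_q_kb : q <= size (B k) + b by lia.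
split.
- by rewrite size_lastn // size_cat size_nseq.
- exact (right_special_Bword_spacer B_occurs le_Nk (rec_b k) (late_c b lt_bc) le_q_kb).
by rewrite lastn_lastn ?size_cat ?size_nseq ?lt_q // B_V -catA /= -nseqD lastn_run_tail //; lia.
Qed.

Theorem complexity_limsup_unbounded (R : realType) :
  finite_measure R r s -> unbounded_spacers -> ((2%:R : R)%:E <= limsup_ratio R)%E.
Proof.
move=> fin unb; have B_occurs := Bword_occurs_of_unbounded unb.
have [J J_tail] := Bword_trailing_ones.
apply: limn_esup_ratio_ge2 => e e0 K.
have [K' small] := small_spacer_of_finite_measure fin (divr_gt0 e0 (ltr0Sn _ 1)).
pose M := Num.Def.archi_bound ((J.+1)%:R / (e / 2) : R).
pose k := maxn (maxn N K) (maxn K' M); have size_k := size_Bword k.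
have le_Nk : N <= k by lia.
have le_K'k : K' <= k by lia.
have [i lt_ir small_i] := small k le_K'k; set g := s k.+1 i in small_i *.
have [V B_V] := J_tail k le_Nk.
exists (size (B k)).+1, (J + g).+1; split; first by lia.
  have : (J.+1%:R / (e / 2) < M%:R :> R)%R by apply: archi_boundP; rewrite !divr_ge0 ?(ltW e0).
  rewrite ltr_pdivrMr ?divr_gt0 // => lt_JM.
  have le_Mk : (M%:R <= (size (B k))%:R :> R)%R by rewrite ler_nat; lia.
  rewrite -addSn natrD -addn1 natrD; nra.
have late_g : late_spacer k g by exists k.+1, i.
apply: (complexity_Bword_ge (w := nseq^~ true) B_occurs le_Nk B_V late_g).
  by have [v lt_gv late_v] := unb k g.+1; exists v.
move=> q /andP [lt_q _]; split.
- exact: size_nseq.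
- exact: right_special_ones B_occurs q unb.
by rewrite lastn_nseq.
Qed.

End Bword.

Theorem proposition2p5 (R : realType) (r : nat -> nat) (s : nat -> nat -> nat) :
  (forall n, (1 <= n)%N -> (0 < r n)%N) ->
  finite_measure R r s ->
  (exists N, forall n, (N <= n)%N -> s n (r n) = 0%N) ->
  (forall N, exists n, [/\ (N <= n)%N, (1 <= n)%N &
     exists a b c : nat, [/\ a <> b, b <> c, a <> c &
       forall v, v \in [:: a; b; c] ->
         exists m i, [/\ (n <= m)%N, (i < r m)%N & s m i = v]]]) ->
  ((2%:R : R)%:E <= limn_esup (fun q : nat => ((complexity r s q)%:R / q%:R : R)%:E))%E.
Proof.
move=> r_gt0 fin [N last0] three_values.
have [unb | /recurrent_of_bounded [K rec_late]] := pselect (unbounded_spacers r s).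
  exact: (complexity_limsup_unbounded r_gt0 last0 fin unb).
have [n [le_Kn _ [x [y [z [neq_xy neq_yz neq_xz late_xyz]]]]]] := three_values K.+1.
have rec v : v \in [:: x; y; z] -> recurrent_spacer r s v.
  by case/late_xyz => m [i [le_nm lt_ir <-]]; apply: rec_late lt_ir; lia.
have rec_x := rec x (mem_head _ _).
have rec_y : recurrent_spacer r s y by apply: rec; rewrite !inE eqxx orbT.
have rec_z : recurrent_spacer r s z by apply: rec; rewrite !inE eqxx !orbT.
have limsup_max := complexity_limsup_recurrent r_gt0 last0 R.
have : (x < z /\ y < z) \/ (x < y /\ z < y) \/ (y < x /\ z < x) by lia.
case=> [[lt_xz lt_yz] | [[lt_xy lt_zy] | [lt_yx lt_zx]]].
- by apply: limsup_max lt_xz lt_yz rec_x rec_y rec_z; apply/eqP.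
- by apply: limsup_max lt_xy lt_zy rec_x rec_z rec_y; apply/eqP.
- by apply: limsup_max lt_yx lt_zx rec_y rec_z rec_x; apply/eqP.
Qed.
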